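(* Consider Algorithm SS-SQP (described in the context) under the standing assumptions (A1), (A2). There exists a constant $\kappa_l>0$ such that for all $k\in\mathbb{N}$, $$\Delta l(x_k,\bar\tau_k,\bar g_k,\bar d_k)\ge\kappa_l\bar\tau_k(\|\bar d_k\|^2+\|c_k\|).$$
   Context: Problem: $\min_{x\in\mathbb{R}^n}f(x)$ s.t. $c(x)=0$ with $f,c$ continuously differentiable, $c:\mathbb{R}^n\to\mathbb{R}^m$, $m\le n$; $c_k=c(x_k)$, $J_k=\nabla c(x_k)^T$; $\|\cdot\|$ Euclidean norm. $\Delta l(x,\tau,g,d)=-\tau g^Td+\|c(x)\|_1$. Standing assumption (A1): there is an open convex set $\mathcal{X}$ containing all iterates and trial iterates; $f$ bounded below, $\nabla f$ $L$-Lipschitz and bounded, $c$ bounded, each $\nabla c_i$ Lipschitz and bounded on $\mathcal{X}$; singular values of $\nabla c(x)^T$ bounded away from zero on $\mathcal{X}$. (A2): $H_k$ symmetric, chosen independently of $\bar g_k$, $\|H_k\|\le\kappa_H$, $u^TH_ku\ge\zeta\|u\|^2$ for $u\in\mathrm{Null}(J_k)$, $\kappa_H,\zeta>0$. Algorithm SS-SQP: inputs $x_0$, $\bar\tau_{-1}>0$, $\alpha_{\max}\in(0,1]$, $\alpha_0\in(0,\alpha_{\max}]$, $\epsilon_f\ge0$, $\gamma,\theta,\sigma,\epsilon_\tau\in(0,1)$. At iteration $k$: random gradient estimate $\bar g_k$; solve $\begin{bmatrix}H_k & J_k^T\\ J_k&0\end{bmatrix}\begin{bmatrix}\bar d_k\\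 \bar y_k\end{bmatrix}=-\begin{bmatrix}\bar g_k\\ c_k\end{bmatrix}$; $\bar\tau_k^{\rm trial}=\infty$ if $\bar g_k^T\bar d_k+\max\{\bar d_k^TH_k\bar d_k,0\}\le0$, else $(1-\sigma)\|c_k\|_1/(\bar g_k^T\bar d_k+\max\{\bar d_k^TH_k\bar d_k,0\})$; $\bar\tau_k=\bar\tau_{k-1}$ if $\bar\tau_{k-1}\le\bar\tau_k^{\rm trial}$, else $\min\{(1-\epsilon_\tau)\bar\tau_{k-1},\bar\tau_k^{\rm trial}\}$; $x_k^+=x_k+\alpha_k\bar d_k$; with objective estimates $\bar f$ and $\bar\phi(x,\tau;\xi)=\tau\bar f(x;\xi)+\|c(x)\|_1$, set $x_{k+1}=x_k^+$, $\alpha_{k+1}=\min\{\alpha_{\max},\alpha_k/\gamma\}$ if $\bar\phi(x_k^+,\bar\tau_k;\xi_k^+)\le\bar\phi(x_k,\bar\tau_k;\xi_k^0)-\alpha_k\theta\Delta l(x_k,\bar\tau_k,\bar g_k,\bar d_k)+2\bar\tau_k\epsilon_f$, else $x_{k+1}=x_k$, $\alpha_{k+1}=\gamma\alpha_k$. *)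

From mathcomp Require Import all_boot all_order all_algebra.
From mathcomp Require Import reals.
Set Implicit Arguments. Unset Strict Implicit. Unset Printing Implicit Defensive.
Import Order.TTheory GRing.Theory Num.Theory.
Local Open Scope ring_scope.

Section SSSQP.
Variable R : realType.

Definition dotv (n : nat) (u v : 'cV[R]_n) : R := \sum_(i < n) u i 0 * v i 0.
Definition enorm (n : nat) (v : 'cV[R]_n) : R := Num.sqrt (dotv v v).
Definition norm1 (n : nat) (v : 'cV[R]_n) : R := \sum_(i < n) `|v i 0|.

Definition has_gradient_at (n : nat) (f : 'cV[R]_n -> R) (g x : 'cV[R]_n) : Prop :=
  forall e : R, 0 < e -> exists2 d : R, 0 < d & forall y : 'cV[R]_n,
    enorm (y - x) < d -> `|f y - f x - dotv g (y - x)| <= e * enorm (y - x).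

Definition cont_at (n p : nat) (F : 'cV[R]_n -> 'cV[R]_p) (x : 'cV[R]_n) : Prop :=
  forall e : R, 0 < e -> exists2 d : R, 0 < d & forall y : 'cV[R]_n,
    enorm (y - x) < d -> enorm (F y - F x) < e.

Definition C1_with_gradient (n : nat) (f : 'cV[R]_n -> R)
    (gradf : 'cV[R]_n -> 'cV[R]_n) : Prop :=
  forall x, has_gradient_at f (gradf x) x /\ cont_at gradf x.

Definition C1_with_jacobian (n m : nat) (c : 'cV[R]_n -> 'cV[R]_m)
    (J : 'cV[R]_n -> 'M[R]_(m, n)) : Prop :=
  forall i : 'I_m, C1_with_gradient (fun x => c x i 0) (fun x => (row i (J x))^T).

Definition open_set (n : nat) (X : 'cV[R]_n -> Prop) : Prop :=
  forall x, X x -> exists2 r : R, 0 < r & forall y, enorm (y - x) < r -> X y.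

Definition convex_set (n : nat) (X : 'cV[R]_n -> Prop) : Prop :=
  forall x y (t : R), X x -> X y -> 0 <= t <= 1 -> X ((1 - t) *: x + t *: y).

Definition lipschitz_on (n p : nat) (X : 'cV[R]_n -> Prop)
    (F : 'cV[R]_n -> 'cV[R]_p) (L : R) : Prop :=
  forall x y, X x -> X y -> enorm (F x - F y) <= L * enorm (x - y).

Definition bounded_on (n p : nat) (X : 'cV[R]_n -> Prop) (F : 'cV[R]_n -> 'cV[R]_p) : Prop :=
  exists B : R, forall x, X x -> enorm (F x) <= B.

(* s is a singular value of A : 'M_(m,n) (with m <= n): s >= 0 and s^2 is an
   eigenvalue of A A^T (these are the m singular values of A) *)
Definition singular_value (m n : nat) (A : 'M[R]_(m, n)) (s : R) : Prop :=
  0 <= s /\ eigenvalue (A *m A^T) (s ^+ 2).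

Definition opnorm_le (n : nat) (H : 'M[R]_n) (k : R) : Prop :=
  forall u : 'cV[R]_n, enorm (H *m u) <= k * enorm u.

Definition Delta_l (n m : nat) (c : 'cV[R]_n -> 'cV[R]_m) (x : 'cV[R]_n)
    (tau : R) (g d : 'cV[R]_n) : R :=
  - tau * dotv g d + norm1 (c x).

(* trial merit parameter; None encodes +infinity *)
Definition tau_trial (n m : nat) (sigma : R) (ck : 'cV[R]_m) (H : 'M[R]_n)
    (g d : 'cV[R]_n) : option R :=
  let den := dotv g d + Num.max (dotv d (H *m d)) 0 in
  if den <= 0 then None else Some ((1 - sigma) * norm1 ck / den).

Definition tau_update (eps_tau taup : R) (tr : option R) : R :=
  match tr with
  | None => taup
  | Some t => if taup <= t then taup else Num.min ((1 - eps_tau) * taup) t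
  end.

End SSSQP.

(* Split the step as d = u + v with v = J^T w in the range of J^T and J u = 0.  As the
   singular values of J are at least smin, J J^T >= smin^2 (the least Rayleigh quotient of
   J J^T is an eigenvalue, attained on the unit sphere), whence smin^2 |v|^2 <= |c|^2.  The
   curvature of H on Null(J) and |H| <= kappaH then bound zeta^2 |d|^2 by
   4 zeta max(d^T H d, 0) + K |v|^2, and |c|^2 <= C |c| because c is bounded.  The merit
   parameter never exceeds tau_{-1} nor the trial value, so
   Delta l >= tau max(d^T H d, 0) + sigma |c|_1, which dominates kappa_l tau (|d|^2 + |c|)
   once kappa_l is small enough. *)

From mathcomp Require Import all_boot all_order all_algebra.
From mathcomp Require Import reals ring lra.
From mathcomp Require Import boolp classical_sets topology normedtype derive matrix_normedtype.
Import Order.TTheory GRing.Theory Num.Theory.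
Import numFieldNormedType.Exports.
Set Implicit Arguments. Unset Strict Implicit. Unset Printing Implicit Defensive.
Local Open Scope ring_scope.

Section Dot.
Variables (R : realType) (n : nat).
Implicit Types (u v w : 'cV[R]_n) (a : R).

Lemma dotvE u v : dotv u v = (u^T *m v) 0 0.
Proof. by rewrite /dotv !mxE; apply: eq_bigr => i _; rewrite !mxE. Qed.

Lemma dotvC u v : dotv u v = dotv v u.
Proof. by apply: eq_bigr => i _; rewrite mulrC. Qed.

Lemma dotvDl u w v : dotv (u + w) v = dotv u v + dotv w v.
Proof. by rewrite /dotv -big_split; apply: eq_bigr => i _; rewrite !mxE mulrDl. Qed.

Lemma dotvDr u w v : dotv v (u + w) = dotv v u + dotv v w.
Proof. by rewrite dotvC dotvDl !(dotvC v). Qed.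

Lemma dotvZl a u v : dotv (a *: u) v = a * dotv u v.
Proof. by rewrite /dotv mulr_sumr; apply: eq_bigr => i _; rewrite !mxE mulrA. Qed.

Lemma dotvZr a u v : dotv v (a *: u) = a * dotv v u.
Proof. by rewrite dotvC dotvZl dotvC. Qed.

Lemma dotvNl u v : dotv (- u) v = - dotv u v.
Proof. by rewrite -scaleN1r dotvZl mulN1r. Qed.

Lemma dotvNr u v : dotv v (- u) = - dotv v u.
Proof. by rewrite dotvC dotvNl dotvC. Qed.

Lemma dotv0r v : dotv v 0 = 0.
Proof. by rewrite /dotv big1 // => i _; rewrite mxE mulr0. Qed.

Lemma dotv_ge0 u : 0 <= dotv u u.
Proof. by rewrite /dotv sumr_ge0 // => i _; rewrite -expr2 sqr_ge0. Qed.

Lemma dotv_eq0 u : (dotv u u == 0) = (u == 0).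
Proof.
apply/idP/eqP => [|->]; last by rewrite dotv0r.
rewrite /dotv psumr_eq0 => [/allP u0|i _]; last by rewrite -expr2 sqr_ge0.
apply/matrixP => i j; rewrite (ord1 j) !mxE.
by have := u0 i (mem_index_enum _); rewrite -expr2 sqrf_eq0 => /eqP.
Qed.

Lemma dotv_young u v a : 2 * a * dotv u v <= a ^+ 2 * dotv u u + dotv v v.
Proof.
have := dotv_ge0 (a *: u - v).
rewrite dotvDl !dotvDr !dotvNl !dotvNr !dotvZl !dotvZr (dotvC v u).
nra.
Qed.

Lemma enorm_ge0 v : 0 <= enorm v.
Proof. exact: sqrtr_ge0. Qed.

Lemma enorm_sqr v : enorm v ^+ 2 = dotv v v.
Proof. by rewrite sqr_sqrtr // dotv_ge0. Qed.

Lemma norm1_ge0 v : 0 <= norm1 v.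
Proof. by rewrite sumr_ge0. Qed.

Lemma enorm_le_norm1 v : enorm v <= norm1 v.
Proof.
rewrite -ler_sqr ?nnegrE ?enorm_ge0 ?norm1_ge0 // enorm_sqr.
rewrite /dotv /norm1 expr2 mulr_suml; apply: ler_sum => i _.
apply: le_trans (ler_norm _) _; rewrite normrM ler_wpM2l //.
by rewrite (bigD1 i) //= lerDl sumr_ge0.
Qed.
End Dot.

Lemma dotv_mulmx (R : realType) n p (A : 'M[R]_(n, p)) (u : 'cV[R]_n) (v : 'cV[R]_p) :
  dotv u (A *m v) = dotv (A^T *m u) v.
Proof. by rewrite !dotvE trmx_mul trmxK mulmxA. Qed.


Section Rayleigh.
Variable R : realType.

Lemma quadform_continuous m (M : 'M[R]_m) :
  continuous (fun v : 'rV[R]_m => dotv v^T (M *m v^T)).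
Proof.
have -> : (fun v : 'rV[R]_m => dotv v^T (M *m v^T)) =
          (fun v => \sum_i v 0 i * \sum_j M i j * v 0 j).
  apply: funext => v; apply: eq_bigr => i _; rewrite !mxE.
  by congr (_ * _); apply: eq_bigr => j _; rewrite !mxE.
apply: (continuous_big add_continuous) => i _ v.
apply: continuousM; first exact: coord_continuous.
apply: (continuous_big add_continuous) => j _ {}v.
by apply: continuousM; [exact: cst_continuous | exact: coord_continuous].
Qed.

Lemma unit_sphere_EVT_min m (f : 'rV[R]_m.+1 -> R) : continuous f ->
  exists2 v, dotv v^T v^T = 1 & forall u, dotv u^T u^T = 1 -> f v <= f u.
Proof.
move=> f_cont.
pose S := [set v : 'rV[R]_m.+1 | dotv v^T v^T = 1]%classic.
have S_closed : closed S.
  have -> : S = ((fun v => dotv v^T (1%:M *m v^T)) @^-1` [set 1])%classic.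
    by apply: funext => v /=; rewrite mul1mx.
  by apply: preimage_closed; [move=> v _; exact: quadform_continuous | exact: closed_eq].
have S_cube : (S `<=` [set v | forall i, `[(-1 : R), 1]%classic (v 0 i)])%classic.
  move=> v Sv i; rewrite /= in_itv /=.
  have : v 0 i * v 0 i <= 1.
    rewrite -Sv /dotv (bigD1 i) //= !mxE lerDl.
    by apply: sumr_ge0 => j _; rewrite !mxE -expr2 sqr_ge0.
  by move=> vi_le1; apply/andP; split; nra.
have S_compact : compact S.
  apply: subclosed_compact S_closed _ S_cube.
  by apply: (@rV_compact _ _ (fun=> `[(-1 : R), 1]%classic)) => _; exact: segment_compact.
have S_neq0 : (S !=set0)%classic.
  exists (delta_mx 0 0); rewrite /S /= /dotv (bigD1 0) //= big1 => [|j /negbTE j0].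
    by rewrite !mxE eqxx mulr1 addr0.
  by rewrite !mxE j0 mul0r.
have [v Sv v_min] := compact_EVT_min S_neq0 S_compact (continuous_subspaceT f_cont).
by exists v => [|u Su]; [move: Sv; rewrite inE | apply: v_min; rewrite inE].
Qed.

Lemma rayleigh_min_eigenvector n (M : 'M[R]_n) (lam : R) (w0 : 'cV[R]_n) :
  M^T = M -> (forall w, lam * dotv w w <= dotv w (M *m w)) ->
  dotv w0 (M *m w0) = lam * dotv w0 w0 -> M *m w0 = lam *: w0.
Proof.
move=> MT lam_lb w0_min.
(* [p] is a nonnegative quadratic form vanishing at [w0], so its gradient [2 e] at [w0] is zero *)
pose p w := dotv w (M *m w) - lam * dotv w w.
have p_ge0 w : 0 <= p w by rewrite subr_ge0.
pose e := M *m w0 - lam *: w0.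
have eE : M *m w0 = e + lam *: w0 by rewrite subrK.
clearbody e.
have w0e : dotv w0 e = 0.
  by move: w0_min; rewrite eE dotvDr dotvZr; lra.
have p_line t : p (w0 + t *: e) = 2 * t * dotv e e + t ^+ 2 * p e.
  have sym : dotv w0 (M *m e) = dotv e (M *m w0) by rewrite dotv_mulmx MT dotvC.
  rewrite /p mulmxDr -scalemxAr !dotvDl !dotvDr !dotvZl !dotvZr sym eE.
  by rewrite !dotvDr !dotvZr (dotvC e w0) w0e; ring.
have ee0 := dotv_ge0 e; have pe0 := p_ge0 e.
pose s := dotv e e / (p e + 2).
have sE : s * (p e + 2) = dotv e e by rewrite /s divfK // gt_eqF //; lra.
have := p_ge0 (w0 + (- s) *: e); rewrite p_line -sE => h.
have /eqP : s ^+ 2 = 0 by nra.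
rewrite sqrf_eq0 => /eqP s0.
have /eqP : dotv e e = 0 by rewrite -sE s0 mul0r.
by rewrite dotv_eq0 eE => /eqP ->; rewrite add0r.
Qed.

Lemma sym_psd_rayleigh_eigenvalue m (M : 'M[R]_m.+1) :
  M^T = M -> (forall w, 0 <= dotv w (M *m w)) ->
  exists lam, [/\ eigenvalue M lam, 0 <= lam &
                  forall w, lam * dotv w w <= dotv w (M *m w)].
Proof.
move=> MT M_psd.
have [v v_unit v_min] := unit_sphere_EVT_min (@quadform_continuous _ M).
pose lam := dotv v^T (M *m v^T).
have lam_lb w : lam * dotv w w <= dotv w (M *m w).
  have [->|w_neq0] := eqVneq w 0; first by rewrite mulmx0 !dotv0r mulr0.
  have ww_gt0 : 0 < dotv w w by rewrite lt_def dotv_eq0 w_neq0 dotv_ge0.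
  pose r := Num.sqrt (dotv w w).
  have r_gt0 : 0 < r by rewrite sqrtr_gt0.
  have rr : r * r = dotv w w by rewrite -expr2 sqr_sqrtr // ltW.
  have := v_min (r^-1 *: w)^T; rewrite trmxK -scalemxAr !dotvZl !dotvZr !mulrA -invfM rr.
  by rewrite mulVf ?gt_eqF // => /(_ erefl); rewrite mulrC ler_pdivlMr.
have Mv : M *m v^T = lam *: v^T.
  by apply: rayleigh_min_eigenvector => //; rewrite v_unit mulr1.
exists lam; split => //; last exact: M_psd.
apply/eigenvalueP; exists v; first by apply: trmx_inj; rewrite trmx_mul MT Mv linearZ.
by apply/eqP => v0; move: v_unit; rewrite v0 trmx0 dotv0r => /eqP; rewrite eq_sym oner_eq0.
Qed.

Lemma singular_value_gram_lb m n (J : 'M[R]_(m, n)) (smin : R) : 0 <= smin ->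
  (forall s, singular_value J s -> smin <= s) ->
  forall w, smin ^+ 2 * dotv w w <= dotv w (J *m J^T *m w).
Proof.
case: m J => [|m] J smin_ge0 sv_lb w; first by rewrite /dotv !big_ord0 mulr0.
have JJT_sym : (J *m J^T)^T = J *m J^T by rewrite trmx_mul trmxK.
have JJT_psd w' : 0 <= dotv w' (J *m J^T *m w').
  by rewrite -mulmxA dotv_mulmx dotv_ge0.
have [lam [lam_eig lam_ge0 lam_lb]] := sym_psd_rayleigh_eigenvalue JJT_sym JJT_psd.
have : smin <= Num.sqrt lam by apply: sv_lb; split; rewrite ?sqrtr_ge0 ?sqr_sqrtr.
rewrite -(ler_pXn2r (_ : 0 < 2)%N) ?nnegrE ?sqrtr_ge0 // sqr_sqrtr // => smin_le.
exact: le_trans (ler_wpM2r (dotv_ge0 w) smin_le) (lam_lb w).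
Qed.

End Rayleigh.

Section StepDecomposition.
Variable R : realType.

Lemma gram_unitmx m n (J : 'M[R]_(m, n)) (a : R) : 0 < a ->
  (forall w, a * dotv w w <= dotv w (J *m J^T *m w)) -> J *m J^T \in unitmx.
Proof.
move=> a_gt0 gram_lb; rewrite -row_free_unit; apply: inj_row_free => v vJJT0.
have JJTv0 : J *m J^T *m v^T = 0.
  by rewrite -[J *m J^T]trmxK trmx_mul trmxK -trmx_mul vJJT0 trmx0.
have := gram_lb v^T; rewrite JJTv0 dotv0r => vv_le0.
have /eqP : dotv v^T v^T = 0 by apply/eqP; rewrite eq_le dotv_ge0 andbT -(pmulr_rle0 _ a_gt0).
by rewrite dotv_eq0 -trmx0 => /eqP /trmx_inj.
Qed.

Lemma range_null_split m n (J : 'M[R]_(m, n)) (a : R) (d : 'cV[R]_n) (c : 'cV[R]_m) :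
  0 < a -> (forall w, a * dotv w w <= dotv w (J *m J^T *m w)) -> J *m d = - c ->
  exists u v, [/\ d = u + v, J *m u = 0 & a * dotv v v <= dotv c c].
Proof.
move=> a_gt0 gram_lb Jd.
pose w := invmx (J *m J^T) *m (- c).
have JJTw : J *m J^T *m w = - c by rewrite mulKVmx // (gram_unitmx a_gt0 gram_lb).
pose v := J^T *m w.
exists (d - v), v; split; first by rewrite subrK.
  by rewrite mulmxBr mulmxA JJTw Jd subrr.
have JJTw_v : dotv w (J *m J^T *m w) = dotv v v by rewrite -mulmxA dotv_mulmx.
have vv : dotv v v = - dotv w c by rewrite -JJTw_v JJTw dotvNr.
have := ler_wpM2l (ltW a_gt0) (gram_lb w); rewrite JJTw_v.
have := dotv_young w (- c) a; rewrite dotvNr -vv dotvNl dotvNr opprK.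
nra.
Qed.

Definition normal_coef (zeta kH : R) := 4 * kH * zeta + 8 * kH ^+ 2 + 2 * zeta ^+ 2.

Lemma normal_coef_ge0 (zeta kH : R) : 0 <= zeta -> 0 <= kH -> 0 <= normal_coef zeta kH.
Proof. by move=> zeta_ge0 kH_ge0; rewrite /normal_coef; nra. Qed.

Lemma curvature_split_le n (H : 'M[R]_n) (u v : 'cV[R]_n) (zeta kH : R) :
  0 < zeta -> 0 < kH -> H^T = H -> opnorm_le H kH ->
  zeta * dotv u u <= dotv u (H *m u) ->
  zeta ^+ 2 * dotv (u + v) (u + v) <=
    4 * zeta * Num.max (dotv (u + v) (H *m (u + v))) 0 + normal_coef zeta kH * dotv v v.
Proof.
move=> zeta_gt0 kH_gt0 HT H_kH u_curv.
have Hv_le : dotv (H *m v) (H *m v) <= kH ^+ 2 * dotv v v.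
  by have := H_kH v; have := enorm_ge0 (H *m v); rewrite -!enorm_sqr; nra.
have uHv := dotv_young (- u) (H *m v) (zeta / 2).
have vHv := dotv_young (- v) (H *m v) kH.
have uv := dotv_young u v 1.
rewrite !dotvNl !dotvNr !opprK in uHv vHv.
have dHd : dotv (u + v) (H *m (u + v)) =
    dotv u (H *m u) + 2 * dotv u (H *m v) + dotv v (H *m v).
  have sym : dotv v (H *m u) = dotv u (H *m v) by rewrite dotv_mulmx HT dotvC.
  by rewrite mulmxDr !dotvDl !dotvDr sym; ring.
have dd : dotv (u + v) (u + v) = dotv u u + 2 * dotv u v + dotv v v.
  by rewrite !dotvDl !dotvDr (dotvC v u); ring.
have vHv_ge : - dotv v (H *m v) <= kH * dotv v v.
  by rewrite -(ler_pM2l kH_gt0); nra.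
(* [zeta^2 |u + v|^2 <= 2 zeta^2 |u|^2 + 2 zeta^2 |v|^2], and by Young's inequality
   [2 zeta^2 |u|^2 <= 4 zeta d^T H d + (8 kH^2 + 4 kH zeta) |v|^2]. *)
have dHd_le : dotv (u + v) (H *m (u + v)) <= Num.max (dotv (u + v) (H *m (u + v))) 0.
  by rewrite le_max lexx.
move: dHd_le; rewrite dHd dd; set q := Num.max _ 0 => dHd_le.
have zeta4_ge0 : 0 <= 4 * zeta by rewrite mulr_ge0 // ltW.
have := ler_wpM2l zeta4_ge0 dHd_le; have := ler_wpM2l (sqr_ge0 zeta) uv.
have := ler_wpM2l (ltW zeta_gt0) u_curv; have := ler_wpM2l (ltW zeta_gt0) vHv_ge.
rewrite /normal_coef; lra.
Qed.

Lemma sqnorm_step_le m n (J : 'M[R]_(m, n)) (H : 'M[R]_n) (d : 'cV[R]_n)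
    (c : 'cV[R]_m) (a zeta kH : R) :
  0 < a -> 0 < zeta -> 0 < kH ->
  (forall w, a * dotv w w <= dotv w (J *m J^T *m w)) ->
  H^T = H -> opnorm_le H kH ->
  (forall u, J *m u = 0 -> zeta * enorm u ^+ 2 <= dotv u (H *m u)) ->
  J *m d = - c ->
  zeta ^+ 2 * dotv d d <=
    4 * zeta * Num.max (dotv d (H *m d)) 0 + normal_coef zeta kH / a * dotv c c.
Proof.
move=> a_gt0 zeta_gt0 kH_gt0 gram_lb HT H_kH H_curv Jd.
have [u [v [-> Ju v_le]]] := range_null_split a_gt0 gram_lb Jd.
have u_curv : zeta * dotv u u <= dotv u (H *m u) by rewrite -enorm_sqr; exact: H_curv.
apply: le_trans (curvature_split_le v zeta_gt0 kH_gt0 HT H_kH u_curv) _.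
have -> : normal_coef zeta kH * dotv v v = normal_coef zeta kH / a * (a * dotv v v).
  by field; rewrite gt_eqF.
rewrite lerD2l; apply: ler_wpM2l => //.
by rewrite divr_ge0 ?normal_coef_ge0 ?ltW.
Qed.

End StepDecomposition.

Section MeritParameter.
Variable R : realType.

Lemma tau_trial_ge0 n m (sigma : R) (ck : 'cV[R]_m) (H : 'M[R]_n) (g d : 'cV[R]_n) t :
  sigma <= 1 -> tau_trial sigma ck H g d = Some t -> 0 <= t.
Proof.
rewrite /tau_trial => sigma_le1; case: leP => // den_gt0 [<-].
by rewrite divr_ge0 ?mulr_ge0 ?norm1_ge0 ?subr_ge0 // ltW.
Qed.

Lemma tau_update_bounds (eps taup : R) (tr : option R) :
  eps <= 1 -> 0 <= taup -> (forall t, tr = Some t -> 0 <= t) ->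
  [/\ 0 <= tau_update eps taup tr, tau_update eps taup tr <= taup &
      forall t, tr = Some t -> tau_update eps taup tr <= t].
Proof.
move=> eps_le1 taup_ge0; case: tr => [t /(_ t erefl) t_ge0|_] /=; last by split.
case: (leP taup t) => [taup_le|t_lt]; first by split => // _ [<-].
split; last by move=> _ [<-]; rewrite ge_min lexx orbT.
  by rewrite le_min t_ge0 andbT mulr_ge0 // subr_ge0.
by rewrite ge_min (ltW t_lt) orbT.
Qed.

Lemma tau_seq_bounds (eps taum1 : R) (tr : nat -> option R) (tau : nat -> R) :
  eps <= 1 -> 0 <= taum1 -> (forall k t, tr k = Some t -> 0 <= t) ->
  (forall k, tau k = tau_update eps (if k is k'.+1 then tau k' else taum1) (tr k)) ->
  forall k, [/\ 0 <= tau k, tau k <= taum1 & forall t, tr k = Some t -> tau k <= t].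
Proof.
move=> eps_le1 taum1_ge0 tr_ge0 tauE; elim=> [|k [tauk_ge0 tauk_le _]].
  by rewrite tauE; exact: tau_update_bounds eps_le1 taum1_ge0 (tr_ge0 0%N).
have [? ? ?] := tau_update_bounds eps_le1 tauk_ge0 (tr_ge0 k.+1).
by rewrite tauE; split => //; exact: le_trans tauk_le.
Qed.

Lemma Delta_l_ge n m (c : 'cV[R]_n -> 'cV[R]_m) (x : 'cV[R]_n) (H : 'M[R]_n)
    (g d : 'cV[R]_n) (tau sigma : R) :
  0 <= tau -> sigma <= 1 ->
  (forall t, tau_trial sigma (c x) H g d = Some t -> tau <= t) ->
  tau * Num.max (dotv d (H *m d)) 0 + sigma * norm1 (c x) <= Delta_l c x tau g d.
Proof.
move=> tau_ge0 sigma_le1; have := norm1_ge0 (c x).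
rewrite /Delta_l /tau_trial; set mx := Num.max _ 0.
case: (leP (dotv g d + mx) 0) => [den_le0 n1_ge0 _|den_gt0 n1_ge0 /(_ _ erefl)].
  by have := mulr_ge0_le0 tau_ge0 den_le0; nra.
by rewrite ler_pdivlMr //; lra.
Qed.

End MeritParameter.

Section ModelReduction.
Variables (R : realType) (zeta kH a C sigma taumax : R).
Hypotheses (zeta_gt0 : 0 < zeta) (kH_gt0 : 0 < kH) (a_gt0 : 0 < a) (C_ge0 : 0 <= C).
Hypotheses (sigma_gt0 : 0 < sigma) (sigma_le1 : sigma <= 1) (taumax_gt0 : 0 < taumax).

Let B := normal_coef zeta kH * C / (a * zeta ^+ 2).

Let B_ge0 : 0 <= B.
Proof.
by rewrite divr_ge0 ?mulr_ge0 ?normal_coef_ge0 ?sqr_ge0 ?(ltW zeta_gt0) ?(ltW kH_gt0)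
  ?(ltW a_gt0).
Qed.

Let B1_gt0 : 0 < 1 + B.
Proof. by rewrite (lt_le_trans ltr01) // lerDl. Qed.

(* The two terms of the min let [Delta_l_coef * (4 / zeta) <= 1] absorb the curvature part of
   [|d|^2] into [tau * max(d^T H d, 0)], and [Delta_l_coef * taumax * (1 + B) <= sigma]
   absorb the constraint part into [sigma * |c|_1]. *)
Definition Delta_l_coef := Num.min (zeta / 4) (sigma / (taumax * (1 + B))).

Lemma Delta_l_coef_gt0 : 0 < Delta_l_coef.
Proof. by rewrite lt_min !divr_gt0 ?mulr_gt0. Qed.

Lemma sqnorm_step_le_coef m n (J : 'M[R]_(m, n)) (H : 'M[R]_n) (d : 'cV[R]_n)
    (c : 'cV[R]_m) :
  (forall w, a * dotv w w <= dotv w (J *m J^T *m w)) ->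
  H^T = H -> opnorm_le H kH ->
  (forall u, J *m u = 0 -> zeta * enorm u ^+ 2 <= dotv u (H *m u)) ->
  J *m d = - c -> enorm c <= C ->
  dotv d d <= 4 / zeta * Num.max (dotv d (H *m d)) 0 + B * enorm c.
Proof.
move=> gram_lb HT H_kH H_curv Jd c_le.
rewrite -(ler_pM2l (exprn_gt0 2 zeta_gt0)).
apply: le_trans (sqnorm_step_le a_gt0 zeta_gt0 kH_gt0 gram_lb HT H_kH H_curv Jd) _.
have -> : zeta ^+ 2 * (4 / zeta * Num.max (dotv d (H *m d)) 0 + B * enorm c) =
    4 * zeta * Num.max (dotv d (H *m d)) 0 + normal_coef zeta kH / a * (C * enorm c).
  by rewrite /B; field; rewrite !gt_eqF.
rewrite lerD2l; apply: ler_wpM2l; first by rewrite divr_ge0 ?normal_coef_ge0 ?ltW.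
by rewrite -enorm_sqr expr2 ler_wpM2r ?enorm_ge0.
Qed.

Lemma Delta_l_ge_coef n m (c : 'cV[R]_n -> 'cV[R]_m) (J : 'M[R]_(m, n))
    (x : 'cV[R]_n) (H : 'M[R]_n) (g d : 'cV[R]_n) (tau : R) :
  (forall w, a * dotv w w <= dotv w (J *m J^T *m w)) ->
  H^T = H -> opnorm_le H kH ->
  (forall u, J *m u = 0 -> zeta * enorm u ^+ 2 <= dotv u (H *m u)) ->
  J *m d = - c x -> enorm (c x) <= C -> 0 <= tau -> tau <= taumax ->
  (forall t, tau_trial sigma (c x) H g d = Some t -> tau <= t) ->
  Delta_l_coef * tau * (enorm d ^+ 2 + enorm (c x)) <= Delta_l c x tau g d.
Proof.
move=> gram_lb HT H_kH H_curv Jd cx_le tau_ge0 tau_le tau_trial_le.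
have := sqnorm_step_le_coef gram_lb HT H_kH H_curv Jd cx_le.
have := Delta_l_ge tau_ge0 sigma_le1 tau_trial_le.
rewrite enorm_sqr; set mx := Num.max _ 0; set ec := enorm (c x) => Delta_ge dd_le.
have ec_ge0 : 0 <= ec := enorm_ge0 _.
have ec_le_n1 : ec <= norm1 (c x) := enorm_le_norm1 _.
have mx_ge0 : 0 <= mx by rewrite le_max lexx orbT.
have coef_zeta_le1 : Delta_l_coef * (4 / zeta) <= 1.
  by rewrite -ler_pdivlMr ?divr_gt0 // div1r invf_div ge_min lexx.
have coef_taumax_le : Delta_l_coef * (taumax * (1 + B)) <= sigma.
  by rewrite -ler_pdivlMr ?ge_min ?lexx ?orbT ?mulr_gt0.
have coef_tau_ge0 : 0 <= Delta_l_coef * tau by rewrite mulr_ge0 // ltW // Delta_l_coef_gt0.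
have := ler_wpM2l coef_tau_ge0 dd_le.
have := ler_piMl (mulr_ge0 tau_ge0 mx_ge0) coef_zeta_le1.
have := ler_wpM2r (mulr_ge0 (mulr_ge0 (ltW Delta_l_coef_gt0) (ltW B1_gt0)) ec_ge0) tau_le.
have := ler_wpM2r ec_ge0 coef_taumax_le; have := ler_wpM2l (ltW sigma_gt0) ec_le_n1.
lra.
Qed.

End ModelReduction.

Theorem lemma3p12
  (R : realType) (n m : nat) (Hmn : (m <= n)%N)
  (f : 'cV[R]_n -> R) (gradf : 'cV[R]_n -> 'cV[R]_n)
  (c : 'cV[R]_n -> 'cV[R]_m) (J : 'cV[R]_n -> 'M[R]_(m, n))
  (X : 'cV[R]_n -> Prop)
  (* smoothness *)
  (Hf : C1_with_gradient f gradf) (Hc : C1_with_jacobian c J)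
  (* (A1) on the open convex set X *)
  (HXo : open_set X) (HXc : convex_set X)
  (Hfb : exists flow : R, forall x, X x -> flow <= f x)
  (HgL : exists L : R, 0 < L /\ lipschitz_on X gradf L)
  (Hgb : bounded_on X gradf)
  (Hcb : bounded_on X c)
  (HcL : forall i : 'I_m, exists Li : R, lipschitz_on X (fun x => (row i (J x))^T) Li)
  (Hcgb : forall i : 'I_m, bounded_on X (fun x => (row i (J x))^T))
  (Hsv : exists2 smin : R, 0 < smin &
           forall x s, X x -> singular_value (J x) s -> smin <= s)
  (* (A2) constants *)
  (kappaH zeta : R) (HkH : 0 < kappaH) (Hzeta : 0 < zeta)
  (* algorithm parameters *)
  (taum1 alpha_max eps_f gamma theta sigma eps_tau : R)
  (Htaum1 : 0 < taum1) (Hamax : 0 < alpha_max <= 1) (Hepsf : 0 <= eps_f)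
  (Hgamma : 0 < gamma < 1) (Htheta : 0 < theta < 1) (Hsigma : 0 < sigma < 1)
  (Heps_tau : 0 < eps_tau < 1) :
  exists2 kappa_l : R, 0 < kappa_l &
  forall (x : nat -> 'cV[R]_n) (alpha : nat -> R)
         (gbar : nat -> 'cV[R]_n) (H : nat -> 'M[R]_n)
         (d : nat -> 'cV[R]_n) (y : nat -> 'cV[R]_m) (tau : nat -> R)
         (fplus fzero : nat -> R),
    (* initial step size *)
    0 < alpha 0%N <= alpha_max ->
    (* (A2) for every H_k *)
    (forall k, (H k)^T = H k) ->
    (forall k, opnorm_le (H k) kappaH) ->
    (forall k u, J (x k) *m u = 0 -> zeta * enorm u ^+ 2 <= dotv u (H k *m u)) ->
    (* the linear system *)
    (forall k, H k *m d k + (J (x k))^T *m y k = - gbar k) ->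
    (forall k, J (x k) *m d k = - c (x k)) ->
    (* merit parameter update, with tau_{-1} = taum1 *)
    (forall k, tau k = tau_update eps_tau
                  (if k is k'.+1 then tau k' else taum1)
                  (tau_trial sigma (c (x k)) (H k) (gbar k) (d k))) ->
    (* step acceptance / step size update; fplus k, fzero k are the objective
       estimates fbar(x_k^+; xi_k^+) and fbar(x_k; xi_k^0) *)
    (forall k,
       let xp := x k + alpha k *: d k in
       if tau k * fplus k + norm1 (c xp)
            <= tau k * fzero k + norm1 (c (x k))
               - alpha k * theta * Delta_l c (x k) (tau k) (gbar k) (d k)
               + 2 * tau k * eps_f
       then x k.+1 = xp /\ alpha k.+1 = Num.min alpha_max (alpha k / gamma)
       else x k.+1 = x k /\ alpha k.+1 = gamma * alpha k) ->
    (* (A1): X contains all iterates and trial iterates *)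
    (forall k, X (x k) /\ X (x k + alpha k *: d k)) ->
    forall k : nat,
      kappa_l * tau k * (enorm (d k) ^+ 2 + enorm (c (x k)))
        <= Delta_l c (x k) (tau k) (gbar k) (d k).
Proof.
case: Hsv => smin smin_gt0 Hsv; case: Hcb => Cb HCb.
case/andP: Hsigma => sigma_gt0 sigma_lt1; case/andP: Heps_tau => _ eps_tau_lt1.
have Cb_ge0 : 0 <= Num.max Cb 0 by rewrite le_max lexx orbT.
exists (Delta_l_coef zeta kappaH (smin ^+ 2) (Num.max Cb 0) sigma taum1).
  by apply: Delta_l_coef_gt0; rewrite ?exprn_gt0 // ltW.
move=> x alpha gbar H d y tau fplus fzero _ HT H_kH H_curv _ Jd tauE _ HX k.
have [tau_ge0 tau_le tau_trial_le] :=
  tau_seq_bounds (tr := fun k => tau_trial sigma (c (x k)) (H k) (gbar k) (d k))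
    (ltW eps_tau_lt1) (ltW Htaum1) (fun k t => tau_trial_ge0 (ltW sigma_lt1)) tauE k.
apply: (Delta_l_ge_coef _ _ _ _ _ _ _ _ (HT k) (H_kH k) (H_curv k) (Jd k));
  rewrite ?exprn_gt0 ?(ltW sigma_lt1) //.
  exact: singular_value_gram_lb (ltW smin_gt0) (fun s => Hsv _ s (HX k).1).
by rewrite le_max HCb ?orbT //; case: (HX k).
Qed.
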